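(* Let $\Gamma$ be a metrized graph, and for each edge $e_i\in E(\Gamma)$ let $p_i,q_i$ be its end points. For any $p \in V(\Gamma)$, $$\sum_{e_i \in E(\Gamma)}\frac{L_i(R_{a_i,p}-R_{b_i,p})^2}{(L_i+R_i)^2} =\sum_{e_i \in E(\Gamma)}\frac{L_i}{L_i + R_i}\big(r(p_i,p)+r(q_i,p)\big) - \sum_{q \in V(\Gamma)}(\mathrm{val}(q)-2)\,r(p,q) = 2\sum_{q \in V(\Gamma)}r(p,q) -\sum_{e_i \in E(\Gamma)}\frac{R_i}{L_i + R_i} \big(r(p_i,p)+r(q_i,p)\big).$$
   Context: A metrized graph $\Gamma$ is a finite connected graph (multiple edges and self-loops allowed) each of whose edges is identified with a closed segment of positive length, with a finite nonempty vertex set $V(\Gamma)$ containing every point of valence $\neq2$; $\mathrm{val}(q)$ is the valence of $q$ (number of directions emanating from $q$); $L_i$ is the length of $e_i$; $r$ is the effective resistance (edges as resistors of resistance equal to length). For an edge $e_i$: if $\Gamma-e_i$ (interior deleted) is connected, $R_i$ is the effective resistance between $p_i,q_i$ in $\Gamma-e_i$, $R_{a_i,p}=\hat j_{p_i}(p,q_i)$, $R_{b_i,p}=\hat j_{q_i}(p,p_i)$ with $\hat j_z(x,y)$ the voltage function of $\Gamma-e_i$ (potential at $x$ when unit current enters at $y$ and exits at $z$, potential $0$ at $z$); if $e_i$ is a bridge, $R_{a_i,p}=0,R_{b_i,p}=R_i$ for $p$ in the component of $\Gamma-e_i$ containing $p_i$ and $R_{a_i,p}=R_i,R_{b_i,p}=0$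 otherwise, with every expression in $R_i$ interpreted as its limit as $R_i\to\infty$; for a self-loop $R_i=0$. *)

From HB Require Import structures.
From mathcomp Require Import all_boot all_order all_algebra.
From mathcomp Require Import all_classical all_reals topology normedtype.
From Stdlib Require Import ClassicalEpsilon.
Set Implicit Arguments. Unset Strict Implicit. Unset Printing Implicit Defensive.
Import Order.TTheory GRing.Theory Num.Theory.
Import numFieldNormedType.Exports.
Local Open Scope classical_set_scope.
Local Open Scope ring_scope.

(* A metrized graph is given by a finite vertex type V (the vertex set V(Gamma)),
   a finite edge type E, endpoints pe e, qe e : V of each edge e (multiple edges
   and self-loops allowed), and edge lengths L e (> 0). A subgraph obtained by
   deleting edges is described by a predicate [keep : pred E] of kept edges. *)
Section MetrizedGraph.
Variables (R : realType) (V E : finType) (pe qe : E -> V) (L : E -> R).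

Definition adj (keep : pred E) : rel V :=
  fun x y => [exists e, keep e &&
    (((pe e == x) && (qe e == y)) || ((pe e == y) && (qe e == x)))].

Definition gconnected (keep : pred E) : Prop :=
  forall x y : V, connect (adj keep) x y.

(* valence: number of directions emanating from q (a self-loop counts twice) *)
Definition valence (q : V) : nat :=
  #|[set e | pe e == q]| + #|[set e | qe e == q]|.

(* f is the voltage function j_z(., y) of the subgraph keep: unit current enters
   at y, exits at z (Kirchhoff's current law at every vertex, edges of resistance
   L e), and the potential at z is 0. *)
Definition is_voltage (keep : pred E) (z y : V) (f : V -> R) : Prop :=
  f z = 0 /\
  forall v : V,
    \sum_(e | keep e && (pe e == v)) (f v - f (qe e)) / L e
  + \sum_(e | keep e && (qe e == v)) (f v - f (pe e)) / L e
  = (v == y)%:R - (v == z)%:R.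

(* j_z(x, y) in the subgraph keep (a chosen voltage function; unique when the
   subgraph is connected) *)
Definition jfun (keep : pred E) (z x y : V) : R :=
  epsilon (inhabits (fun _ : V => 0 : R)) (is_voltage keep z y) x.

Definition reff (x y : V) : R := jfun predT y x x.

Definition del (i : E) : pred E := fun e => e != i.

Definition nonbridge (i : E) : Prop := gconnected (del i).

(* R_i: effective resistance between p_i and q_i in Gamma - e_i (non-bridge case) *)
Definition Rres (i : E) : R := jfun (del i) (qe i) (pe i) (pe i).

(* R_{a_i,p} = jhat_{p_i}(p, q_i), R_{b_i,p} = jhat_{q_i}(p, p_i) (non-bridge case) *)
Definition Ra (i : E) (p : V) : R := jfun (del i) (pe i) p (qe i).
Definition Rb (i : E) (p : V) : R := jfun (del i) (qe i) p (pe i).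

(* If e_i is not a
   bridge it is evaluated at the actual values; if e_i is a bridge,
   R_{a_i,p} = 0, R_{b_i,p} = R_i when p lies in the component of Gamma - e_i
   containing p_i and R_{a_i,p} = R_i, R_{b_i,p} = 0 otherwise, and the
   expression is interpreted as its limit as R_i -> +oo. *)
Definition edge_val (F : R -> R -> R -> R) (i : E) (p : V) : R :=
  if `[< nonbridge i >] then F (Rres i) (Ra i p) (Rb i p)
  else if connect (adj (del i)) (pe i) p
       then lim (F t 0 t @[t --> +oo])
       else lim (F t t 0 @[t --> +oo]).

End MetrizedGraph.

From HB Require Import structures.
From mathcomp Require Import all_boot all_order all_algebra.
From mathcomp Require Import all_classical all_reals topology normedtype.
From mathcomp Require Import ring lra.
From Stdlib Require Import ClassicalEpsilon.
Import Order.TTheory GRing.Theory Num.Theory.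
Import numFieldNormedType.Exports.
Local Open Scope ring_scope.

(* Let psi_i = j_{q_i}(., p_i) be the potential in Gamma of a unit current entering
   at p_i and leaving at q_i. If e_i is not a bridge the current splits between e_i
   and Gamma - e_i, so psi_i = L_i / (L_i + R_i) * R_{b_i,.}; if e_i is a bridge,
   psi_i is L_i on the side of p_i and 0 on the other side. Since
   r(p,p_i) - r(p,q_i) = r(p_i,q_i) - 2 psi_i(p) and r(p_i,q_i) = psi_i(p_i), every
   edge term can be read off in terms of r alone (in the bridge case as the limit
   R_i -> +oo): the i-th term of the first sum is (r(p,p_i) - r(p,q_i))^2 / L_i and
   L_i / (L_i + R_i) = 1 - r(p_i,q_i) / L_i. Green's identity for x |-> r(x,p)
   against j_p(., v), whose Laplacian at v is 1 - [v = p], gives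
   2 sum_q r(p,q) = sum_i ((r(p,p_i) - r(p,q_i))^2 + r(p_i,q_i)(r(p,p_i) + r(p,q_i))) / L_i,
   which is the outer equality; the middle expression differs from the right one by
   sum_q val(q) r(p,q) = sum_i (r(p,p_i) + r(p,q_i)). *)

Lemma square_system_solvable {F : fieldType} {I : finType} (M : I -> I -> F) :
  (forall f : I -> F, (forall j, \sum_i f i * M i j = 0) -> forall i, f i = 0) ->
  forall b : I -> F, exists f : I -> F, forall j, \sum_i f i * M i j = b j.
Proof.
move=> M_inj b.
pose A : 'M[F]_#|I| := \matrix_(k, l) M (enum_val k) (enum_val l).
pose fun_of (x : 'rV[F]_#|I|) : I -> F := fun i => x 0 (enum_rank i).
have mulA x j : (x *m A) 0 (enum_rank j) = \sum_i fun_of x i * M i j.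
  rewrite mxE (reindex enum_rank); last by exists enum_val => i; rewrite ?enum_rankK ?enum_valK.
  by apply: eq_bigr => i _; rewrite mxE !enum_rankK.
have A_unit : A \in unitmx.
  rewrite -row_free_unit -kermx_eq0; apply/eqP/row_matrixP => k.
  apply/rowP => l; rewrite row0 [RHS]mxE -[l]enum_valK.
  suff ker_eq0 j : \sum_i fun_of (row k (kermx A)) i * M i j = 0.
    exact: (M_inj _ ker_eq0 (enum_val l)).
  by rewrite -mulA -row_mul mulmx_ker row0 mxE.
exists (fun_of (\row_l b (enum_val l) *m invmx A)) => j.
by rewrite -mulA mulmxKV // mxE enum_rankK.
Qed.

Lemma connect_const (T : finType) (U : Type) (e : rel T) (h : T -> U) :
  (forall x y, e x y -> h x = h y) -> forall x y, connect e x y -> h x = h y.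
Proof.
move=> h_e x y /connectP [s e_s ->]; elim: s x e_s => [|z s IHs] x //= /andP [e_xz e_s].
by rewrite (h_e _ _ e_xz) (IHs _ e_s).
Qed.

Section LimitsAtInfinity.
Variables (R : realType) (a : R).
Hypothesis a_gt0 : 0 < a.
Local Open Scope classical_set_scope.

Lemma cvg_const_div_addr : a / (a + t) @[t --> +oo] --> (0 : R).
Proof.
apply/cvgrPdist_lt => eps eps_gt0.
exists (a / eps); split; first by rewrite realE ltW ?orTb // divr_gt0.
move=> t t_gt; rewrite sub0r normrN.
have t_gt0 : 0 < t by apply: lt_trans t_gt; rewrite divr_gt0.
rewrite ger0_norm ?divr_ge0 ?ltW ?addr_gt0 // ltr_pdivrMr ?addr_gt0 //.
rewrite ltr_pdivrMr // in t_gt.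
have := mulr_gt0 eps_gt0 a_gt0; lra.
Qed.

Lemma cvg_div_addr : t / (a + t) @[t --> +oo] --> (1 : R).
Proof.
apply/cvgrPdist_lt => eps eps_gt0.
exists (a / eps); split; first by rewrite realE ltW ?orTb // divr_gt0.
move=> t t_gt.
have t_gt0 : 0 < t by apply: lt_trans t_gt; rewrite divr_gt0.
have -> : 1 - t / (a + t) = a / (a + t) by field; rewrite gt_eqF // addr_gt0.
rewrite ger0_norm ?divr_ge0 ?ltW ?addr_gt0 // ltr_pdivrMr ?addr_gt0 //.
rewrite ltr_pdivrMr // in t_gt.
have := mulr_gt0 eps_gt0 a_gt0; lra.
Qed.

Lemma cvg_sqr_div_addr : a * t ^+ 2 / (a + t) ^+ 2 @[t --> +oo] --> a.
Proof.
have -> : (fun t => a * t ^+ 2 / (a + t) ^+ 2) =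
          (fun=> a) \* ((fun t => t / (a + t)) \* (fun t => t / (a + t))).
  by apply/funext => t /=; rewrite -exprVn; ring.
rewrite -[X in _ --> X]mulr1 -[X in _ --> a * X]mulr1.
by apply: cvgM; [exact: cvg_cst | apply: cvgM; exact: cvg_div_addr].
Qed.

Lemma lim_const_div_addr : lim (a / (a + t) @[t --> +oo]) = 0.
Proof. by apply: cvg_lim; [exact: norm_hausdorff | exact: cvg_const_div_addr]. Qed.

Lemma lim_div_addr : lim (t / (a + t) @[t --> +oo]) = 1.
Proof. by apply: cvg_lim; [exact: norm_hausdorff | exact: cvg_div_addr]. Qed.

Lemma lim_sqr_div_addr : lim (a * t ^+ 2 / (a + t) ^+ 2 @[t --> +oo]) = a.
Proof. by apply: cvg_lim; [exact: norm_hausdorff | exact: cvg_sqr_div_addr]. Qed.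

End LimitsAtInfinity.

Section Network.
Context {R : realType} {V E : finType} {pe qe : E -> V} {L : E -> R}.
Hypothesis L_pos : forall e, 0 < L e.

Let L_neq0 e : L e != 0. Proof. by rewrite gt_eqF. Qed.

Definition laplacian (keep : pred E) (f : V -> R) (v : V) : R :=
    \sum_(e | keep e && (pe e == v)) (f v - f (qe e)) / L e
  + \sum_(e | keep e && (qe e == v)) (f v - f (pe e)) / L e.

Lemma is_voltageE keep z y f :
  is_voltage pe qe L keep z y f <->
  f z = 0 /\ forall v, laplacian keep f v = (v == y)%:R - (v == z)%:R.
Proof. by []. Qed.

Lemma sum_by_endpoint (ends : E -> V) (P : pred E) (F : E -> V -> R) :
  \sum_v \sum_(e | P e && (ends e == v)) F e v = \sum_(e | P e) F e (ends e).
Proof.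
rewrite [RHS](partition_big ends predT) //; apply: eq_bigr => v _.
by apply: eq_bigr => e /andP [_ /eqP ->].
Qed.

Lemma sum_mul_laplacian keep (g : V -> R) (H : V -> V -> R) :
  \sum_v g v * laplacian keep (H^~ v) v =
  \sum_(e | keep e) (g (pe e) * (H (pe e) (pe e) - H (qe e) (pe e))
                   + g (qe e) * (H (qe e) (qe e) - H (pe e) (qe e))) / L e.
Proof.
under eq_bigr do rewrite mulrDr !mulr_sumr.
rewrite big_split /= !sum_by_endpoint -big_split /=.
by apply: eq_bigr => e _; ring.
Qed.

Lemma green_identity keep (f g : V -> R) :
  \sum_v g v * laplacian keep f v =
  \sum_(e | keep e) (f (pe e) - f (qe e)) * (g (pe e) - g (qe e)) / L e.
Proof.
by rewrite (sum_mul_laplacian keep g (fun x _ => f x)); apply: eq_bigr => e _; ring.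
Qed.

Lemma sum_laplacian keep f : \sum_v laplacian keep f v = 0.
Proof.
transitivity (\sum_v (fun=> 1) v * laplacian keep f v).
  by apply: eq_bigr => v _; rewrite mul1r.
by rewrite green_identity big1 // => e _; rewrite subrr mulr0 mul0r.
Qed.

Lemma laplacian_lin keep (h f g : V -> R) a b c w :
  (forall v, h v = a * f v + b * g v + c) ->
  laplacian keep h w = a * laplacian keep f w + b * laplacian keep g w.
Proof.
move=> hE; rewrite /laplacian.
have diffE u v e : (h v - h u) / L e = a * ((f v - f u) / L e) + b * ((g v - g u) / L e).
  by rewrite !hE; ring.
under eq_bigr do rewrite diffE.
under [X in _ + X]eq_bigr do rewrite diffE.
by rewrite !big_split -!mulr_sumr /=; ring.
Qed.

Lemma laplacian_sum keep (I : finType) (c : I -> R) (F : I -> V -> R) w :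
  laplacian keep (fun v => \sum_i c i * F i v) w = \sum_i c i * laplacian keep (F i) w.
Proof.
rewrite /laplacian.
have diffE u v e : ((\sum_i c i * F i v) - (\sum_i c i * F i u)) / L e
    = \sum_i c i * ((F i v - F i u) / L e).
  by rewrite -sumrB mulr_suml; apply: eq_bigr => i _; ring.
under eq_bigr do rewrite diffE.
under [X in _ + X]eq_bigr do rewrite diffE.
rewrite exchange_big [X in _ + X]exchange_big /= -big_split /=.
by apply: eq_bigr => i _; rewrite mulrDr !mulr_sumr.
Qed.

Lemma sum_mul_delta (g : V -> R) y : \sum_v g v * (v == y)%:R = g y.
Proof.
by rewrite (bigD1 y) //= eqxx mulr1 big1 ?addr0 // => v /negbTE ->; rewrite mulr0.
Qed.

Lemma sum_mul_delta2 (g : V -> R) y z :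
  \sum_v g v * ((v == y)%:R - (v == z)%:R) = g y - g z.
Proof. by under eq_bigr do rewrite mulrBr; rewrite sumrB !sum_mul_delta. Qed.

Lemma laplacian_delta_expand keep f v :
  laplacian keep f v = \sum_u f u * laplacian keep (fun x => (x == u)%:R) v.
Proof.
rewrite -laplacian_sum; congr laplacian; apply/funext => x.
by under eq_bigr do rewrite eq_sym; rewrite sum_mul_delta.
Qed.

Lemma adj_sym keep : symmetric (adj pe qe keep).
Proof.
move=> x y; apply/existsP/existsP => -[e e_xy]; exists e; move: e_xy;
  by case: (keep e) => //=; rewrite orbC.
Qed.

Lemma harmonic_const_edge keep h :
  (forall v, laplacian keep h v = 0) -> forall e, keep e -> h (pe e) = h (qe e).
Proof.
move=> harm e keep_e.
have := green_identity keep h h.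
rewrite big1 => [/esym energy0|v _]; last by rewrite harm mulr0.
have nonneg i : keep i -> 0 <= (h (pe i) - h (qe i)) * (h (pe i) - h (qe i)) / L i.
  by move=> _; rewrite divr_ge0 ?(ltW (L_pos i)) // -expr2 sqr_ge0.
have /eqP := psumr_eq0P nonneg energy0 keep_e.
by rewrite mulf_eq0 invr_eq0 (negbTE (L_neq0 e)) orbF mulf_eq0 orbb subr_eq0 => /eqP.
Qed.

Lemma harmonic_eq0 keep z h : gconnected pe qe keep ->
  h z = 0 -> (forall v, v != z -> laplacian keep h v = 0) -> forall x, h x = 0.
Proof.
move=> conn hz harm_off.
have harm v : laplacian keep h v = 0.
  have [->|/harm_off//] := eqVneq v z.
  by rewrite -(sum_laplacian keep h) (bigD1 z) //= big1 ?addr0.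
have edge := harmonic_const_edge keep h harm.
move=> x; rewrite -hz; apply: connect_const (conn x z) => u w.
by case/existsP => e /andP [keep_e /orP [] /andP [/eqP <- /eqP <-]]; rewrite edge.
Qed.

Lemma is_voltage_off_sink keep z y f : f z = 0 ->
  (forall v, v != z -> laplacian keep f v = (v == y)%:R - (v == z)%:R) ->
  is_voltage pe qe L keep z y f.
Proof.
move=> fz lap_off; apply/is_voltageE; split => // v.
have [->|vz] := eqVneq v z; last by rewrite lap_off // (negbTE vz).
have lap_sum := sum_laplacian keep f.
have delta_sum : \sum_w (((w == y)%:R - (w == z)%:R) : R) = 0.
  transitivity (\sum_w 1 * (((w == y)%:R - (w == z)%:R) : R)).
    by apply: eq_bigr => w _; rewrite mul1r.
  by rewrite sum_mul_delta2 subrr.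
rewrite (bigD1 z) //= (eq_bigr _ lap_off) in lap_sum.
rewrite (bigD1 z) //= in delta_sum.
by move: lap_sum delta_sum; rewrite eqxx; set s := \sum_(w | w != z) _; lra.
Qed.

Lemma voltage_exists keep z y :
  gconnected pe qe keep -> exists f, is_voltage pe qe L keep z y f.
Proof.
move=> conn.
(* The Laplacian with its z-th equation replaced by f z is injective by
   harmonic_eq0, hence invertible. *)
pose M u v : R := if v == z then (u == z)%:R
                  else laplacian keep (fun x => (x == u)%:R) v.
have sumM f v : \sum_u f u * M u v = if v == z then f z else laplacian keep f v.
  rewrite /M; case: (v == z); first exact: sum_mul_delta.
  by rewrite [RHS]laplacian_delta_expand.
pose b v : R := if v == z then 0 else (v == y)%:R - (v == z)%:R.
have M_inj h : (forall v, \sum_u h u * M u v = 0) -> forall u, h u = 0.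
  move=> hM; apply: (harmonic_eq0 keep z h conn) => [|v vz].
  - by have := hM z; rewrite sumM eqxx.
  - by have := hM v; rewrite sumM (negbTE vz).
have [f solf] := square_system_solvable M M_inj b.
exists f; apply: is_voltage_off_sink => [|v vz].
- by have := solf z; rewrite sumM /b eqxx.
- by have := solf v; rewrite sumM /b (negbTE vz).
Qed.

Section Connected.
Context {keep : pred E} (conn : gconnected pe qe keep).
Notation j := (jfun pe qe L keep).

Lemma jfun_voltage z y : is_voltage pe qe L keep z y (j z ^~ y).
Proof. exact: epsilon_spec (voltage_exists keep z y conn). Qed.

Lemma jfun_eq z y f : is_voltage pe qe L keep z y f -> forall x, j z x y = f x.
Proof.
move=> /is_voltageE [fz lap_f] x; apply/eqP; rewrite -subr_eq0; apply/eqP.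
have /is_voltageE [jz lap_j] := jfun_voltage z y.
apply: (harmonic_eq0 keep z (fun v => j z v y - f v) conn) => [|v _].
  by rewrite jz fz subrr.
rewrite (laplacian_lin keep _ (j z ^~ y) f 1 (-1) 0).
  by rewrite lap_j lap_f; ring.
by move=> u; ring.
Qed.

Lemma jfun_sink z x : j z z x = 0.
Proof. by have /is_voltageE [] := jfun_voltage z x. Qed.

Lemma jfun_sym z x y : j z x y = j z y x.
Proof.
have pairing u w : \sum_v j z v u * laplacian keep (j z ^~ w) v = j z w u.
  have /is_voltageE [_ lap_w] := jfun_voltage z w.
  by under eq_bigr do rewrite lap_w; rewrite sum_mul_delta2 jfun_sink subr0.
rewrite -pairing -[RHS]pairing !green_identity.
by apply: eq_bigr => e _; ring.
Qed.

Lemma jfun_ge0 z y : 0 <= j z y y.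
Proof.
have /is_voltageE [_ lap_y] := jfun_voltage z y.
have := green_identity keep (j z ^~ y) (j z ^~ y).
under eq_bigr do rewrite lap_y.
rewrite sum_mul_delta2 jfun_sink subr0 => ->.
by apply: sumr_ge0 => e _; rewrite divr_ge0 ?(ltW (L_pos e)) // -expr2 sqr_ge0.
Qed.

Lemma jfun_swap x y z : j y x z = j z y y - j z x y.
Proof.
apply: (jfun_eq y z (fun v => j z y y - j z v y)).
apply/is_voltageE; split; first by rewrite subrr.
have /is_voltageE [_ lap_y] := jfun_voltage z y.
move=> v; rewrite (laplacian_lin keep _ (j z ^~ y) (j z ^~ y) (-1) 0 (j z y y)).
  by rewrite lap_y; ring.
by move=> u; ring.
Qed.

Lemma jfun_change_sink x y z : j y x x = j z x x + j z y y - 2 * j z x y.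
Proof.
have /is_voltageE [_ lap_x] := jfun_voltage z x.
have /is_voltageE [_ lap_y] := jfun_voltage z y.
pose h v := j z v x - j z v y - (j z y x - j z y y).
have h_voltage : is_voltage pe qe L keep y x h.
  apply/is_voltageE; split; first by rewrite /h; ring.
  move=> v; rewrite (laplacian_lin keep h (j z ^~ x) (j z ^~ y) 1 (-1) (- (j z y x - j z y y))).
    by rewrite lap_x lap_y; ring.
  by move=> u; rewrite /h; ring.
by rewrite (jfun_eq _ _ _ h_voltage) /h (jfun_sym z y x); ring.
Qed.

End Connected.

Lemma sum_split_edge (Q : pred E) (F : E -> R) i :
  \sum_(e | predT e && Q e) F e = \sum_(e | del i e && Q e) F e + (Q i)%:R * F i.
Proof.
case Qi: (Q i).
  rewrite (bigD1 i) /= ?Qi // mul1r addrC; congr (_ + _).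
  by apply: eq_bigl => e; rewrite /del andbC.
rewrite mul0r addr0; apply: eq_bigl => e; rewrite /del /=.
by case: (eqVneq e i) => [->|]; rewrite ?Qi.
Qed.

Lemma laplacian_del i f v :
  laplacian predT f v = laplacian (del i) f v
    + ((pe i == v)%:R * (f v - f (qe i)) + (qe i == v)%:R * (f v - f (pe i))) / L i.
Proof.
rewrite /laplacian (sum_split_edge (fun e => pe e == v) _ i).
by rewrite (sum_split_edge (fun e => qe e == v) _ i); field.
Qed.

Lemma sum_valence_mul (g : V -> R) :
  \sum_q (valence pe qe q)%:R * g q = \sum_e (g (pe e) + g (qe e)).
Proof.
have sum_ends (ends : E -> V) :
    \sum_q #|[set e | ends e == q]%classic|%:R * g q = \sum_e g (ends e).
  rewrite -(sum_by_endpoint ends predT (fun _ v => g v)); apply: eq_bigr => q _.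
  rewrite mulr_natl -sumr_const.
  by apply: eq_bigl => e; rewrite unfold_in /in_set asboolb.
under eq_bigr do rewrite /valence natrD mulrDl.
by rewrite big_split /= !sum_ends -big_split.
Qed.

Section Gamma.
Hypothesis Gconn : gconnected pe qe predT.
Notation j := (jfun pe qe L predT).
Notation r := (reff pe qe L).

Lemma reff_sym x y : r x y = r y x.
Proof. by rewrite /reff (jfun_change_sink Gconn x y x) !jfun_sink //; ring. Qed.

Lemma reff_sub_ends i p :
  r p (pe i) - r p (qe i) = r (pe i) (qe i) - 2 * j (qe i) p (pe i).
Proof. by rewrite /reff (jfun_change_sink Gconn p (pe i) (qe i)); ring. Qed.

Lemma L_add_Rres_neq0 i : nonbridge pe qe i -> L i + Rres pe qe L i != 0.
Proof. by move=> nb; rewrite gt_eqF // ltr_wpDr // jfun_ge0. Qed.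

Lemma nonbridge_potential i : nonbridge pe qe i ->
  forall x, j (qe i) x (pe i) = L i / (L i + Rres pe qe L i) * Rb pe qe L i x.
Proof.
move=> nb; have LR := L_add_Rres_neq0 i nb; rewrite /Rres in LR.
have /is_voltageE [Rb_sink lap_Rb] := jfun_voltage nb (qe i) (pe i).
apply: (jfun_eq Gconn); apply/is_voltageE; split; first by rewrite /Rb Rb_sink mulr0.
move=> v; rewrite (laplacian_del i).
set phi := jfun pe qe L (del i) (qe i) ^~ (pe i).
rewrite (laplacian_lin _ _ phi phi (L i / (L i + Rres pe qe L i)) 0 0); last first.
  by move=> u; rewrite /phi /Rb; ring.
have phi_q : phi (qe i) = 0 := Rb_sink.
rewrite mul0r addr0 lap_Rb /Rres /Rb -/(phi (pe i)) -/(phi v) Rb_sink.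
have [->|ne_vp] := eqVneq v (pe i).
  have [qp|ne_qp] := eqVneq (qe i) (pe i).
    have phi_p : phi (pe i) = 0 by move: Rb_sink; rewrite /phi -qp.
    by rewrite phi_p /=; field; rewrite L_neq0.
  by rewrite /=; field; rewrite L_neq0; exact: LR.
have [->|ne_vq] := eqVneq v (qe i).
  by rewrite phi_q /=; field; rewrite L_neq0; exact: LR.
by rewrite /=; field; rewrite L_neq0; exact: LR.
Qed.

Lemma bridge_separates i :
  ~ nonbridge pe qe i -> ~~ connect (adj pe qe (del i)) (pe i) (qe i).
Proof.
move=> bridge; apply/negP => conn_pq; apply: bridge => x y.
apply: connect_sub (Gconn x y) => u w /existsP [e /andP [_ e_uw]].
have [e_i|ne_ei] := eqVneq e i.
  rewrite e_i in e_uw; case/orP: e_uw => /andP [/eqP <- /eqP <-] //.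
  by rewrite (sym_connect_sym (adj_sym _)).
by apply: connect1; apply/existsP; exists e; rewrite /del ne_ei.
Qed.

Lemma bridge_potential i : ~ nonbridge pe qe i ->
  forall x, j (qe i) x (pe i) = if connect (adj pe qe (del i)) (pe i) x then L i else 0.
Proof.
move=> bridge; set C := connect _ (pe i).
have C_q : C (qe i) = false by apply/negbTE/bridge_separates.
have C_p : C (pe i) by exact: connect0.
have C_edge e : e != i -> C (pe e) = C (qe e).
  move=> ne_ei.
  have adj_e : adj pe qe (del i) (pe e) (qe e).
    by apply/existsP; exists e; rewrite /del ne_ei !eqxx.
  by apply/idP/idP => C_e; apply: connect_trans C_e (connect1 _); rewrite // adj_sym.
apply: (jfun_eq Gconn); apply/is_voltageE; split; first by rewrite C_q.
move=> v; rewrite (laplacian_del i).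
have -> : laplacian (del i) (fun x => if C x then L i else 0) v = 0.
  by rewrite /laplacian !big1 ?addr0 // => e /andP [ne_ei /eqP <-];
    rewrite (C_edge e ne_ei) subrr mul0r.
rewrite add0r.
have [->|ne_vp] := eqVneq v (pe i).
  have [qp|ne_qp] := eqVneq (qe i) (pe i); first by move: C_q; rewrite qp C_p.
  by rewrite C_p C_q /=; field.
have [->|ne_vq] := eqVneq v (qe i); first by rewrite C_p C_q /=; field.
by rewrite C_p C_q /=; field.
Qed.

Lemma edge_val_energy i p :
  edge_val pe qe L (fun Ri Rai Rbi => L i * (Rai - Rbi) ^+ 2 / (L i + Ri) ^+ 2) i p
  = (r p (pe i) - r p (qe i)) ^+ 2 / L i.
Proof.
rewrite reff_sub_ends /reff /edge_val; case: asboolP => [nb|bridge].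
  have LR := L_add_Rres_neq0 i nb.
  rewrite /Ra (jfun_swap nb p (pe i) (qe i)) !(nonbridge_potential i nb) /Rres /Rb.
  by field; rewrite L_neq0; exact: LR.
rewrite !(bridge_potential i bridge) connect0.
have sub0_sqr t : L i * (0 - t) ^+ 2 / (L i + t) ^+ 2 = L i * t ^+ 2 / (L i + t) ^+ 2.
  by rewrite sub0r sqrrN.
have subr0_sqr t : L i * (t - 0) ^+ 2 / (L i + t) ^+ 2 = L i * t ^+ 2 / (L i + t) ^+ 2.
  by rewrite subr0.
by case: ifP => _; rewrite ?(funext sub0_sqr) ?(funext subr0_sqr) lim_sqr_div_addr //; field.
Qed.

Lemma edge_val_conductance i p :
  edge_val pe qe L (fun Ri _ _ => L i / (L i + Ri)) i p = 1 - r (pe i) (qe i) / L i.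
Proof.
rewrite /reff /edge_val; case: asboolP => [nb|bridge].
  have LR := L_add_Rres_neq0 i nb.
  rewrite (nonbridge_potential i nb) /Rres /Rb.
  by field; rewrite L_neq0; exact: LR.
by rewrite (bridge_potential i bridge) connect0 lim_const_div_addr // if_same; field.
Qed.

Lemma edge_val_resistance i p :
  edge_val pe qe L (fun Ri _ _ => Ri / (L i + Ri)) i p = r (pe i) (qe i) / L i.
Proof.
rewrite /reff /edge_val; case: asboolP => [nb|bridge].
  have LR := L_add_Rres_neq0 i nb.
  rewrite (nonbridge_potential i nb) /Rres /Rb.
  by field; rewrite L_neq0; exact: LR.
by rewrite (bridge_potential i bridge) connect0 lim_div_addr // if_same; field.
Qed.

Lemma sum_reff_edges p :
  2 * \sum_q r p q = \sum_e ((r p (pe e) - r p (qe e)) ^+ 2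
                             + r (pe e) (qe e) * (r (pe e) p + r (qe e) p)) / L e.
Proof.
have lap_j v : laplacian predT (j p ^~ v) v = 1 - (v == p)%:R.
  by have /is_voltageE [_ ->] := jfun_voltage Gconn p v; rewrite eqxx.
have := sum_mul_laplacian predT (r ^~ p) (j p).
under eq_bigr do rewrite lap_j mulrBr mulr1.
rewrite sumrB sum_mul_delta {2}/reff jfun_sink // subr0 => sumE.
rewrite (eq_bigr _ (fun q _ => reff_sym p q)) sumE mulr_sumr; apply: eq_bigr => e _.
rewrite (reff_sym p (pe e)) (reff_sym p (qe e)) (jfun_sym Gconn p (qe e) (pe e)).
by rewrite /reff (jfun_change_sink Gconn (pe e) (qe e) p); field.
Qed.

End Gamma.
End Network.

Theorem lemma3p3 (R : realType) (V E : finType) (pe qe : E -> V) (L : E -> R)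
  (L_pos : forall e, 0 < L e)
  (Gconn : gconnected pe qe predT)
  (p : V) :
  let r := reff pe qe L in
  let lhs := \sum_(i : E) edge_val pe qe L
                (fun Ri Rai Rbi => L i * (Rai - Rbi) ^+ 2 / (L i + Ri) ^+ 2) i p in
  let mid := \sum_(i : E) edge_val pe qe L (fun Ri _ _ => L i / (L i + Ri)) i p
                * (r (pe i) p + r (qe i) p)
             - \sum_(q : V) ((valence pe qe q)%:R - 2) * r p q in
  let rhs := 2 * \sum_(q : V) r p q
             - \sum_(i : E) edge_val pe qe L (fun Ri _ _ => Ri / (L i + Ri)) i p
                * (r (pe i) p + r (qe i) p) in
  lhs = mid /\ mid = rhs.
Proof.
move=> r lhs mid rhs.
have lhsE : lhs = \sum_i (r p (pe i) - r p (qe i)) ^+ 2 / L i.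
  by apply: eq_bigr => i _; rewrite (edge_val_energy L_pos Gconn).
have condE : \sum_i edge_val pe qe L (fun Ri _ _ => L i / (L i + Ri)) i p
                * (r (pe i) p + r (qe i) p)
    = \sum_i (r (pe i) p + r (qe i) p)
      - \sum_i r (pe i) (qe i) / L i * (r (pe i) p + r (qe i) p).
  rewrite -sumrB; apply: eq_bigr => i _.
  by rewrite (edge_val_conductance L_pos Gconn) /r; ring.
have resE : \sum_i edge_val pe qe L (fun Ri _ _ => Ri / (L i + Ri)) i p
                * (r (pe i) p + r (qe i) p)
    = \sum_i r (pe i) (qe i) / L i * (r (pe i) p + r (qe i) p).
  by apply: eq_bigr => i _; rewrite (edge_val_resistance L_pos Gconn).
have valE : \sum_q ((valence pe qe q)%:R - 2) * r p q
    = \sum_i (r (pe i) p + r (qe i) p) - 2 * \sum_q r p q.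
  under eq_bigr do rewrite mulrBl.
  rewrite sumrB sum_valence_mul mulr_sumr; congr (_ - _).
  by apply: eq_bigr => i _; rewrite /r !(reff_sym L_pos Gconn p).
have mid_rhs : mid = rhs by rewrite /mid /rhs condE valE resE; ring.
split => //; rewrite mid_rhs /rhs lhsE resE (sum_reff_edges L_pos Gconn) -sumrB.
by apply: eq_bigr => i _; rewrite /r; field; rewrite gt_eqF ?L_pos.
Qed.
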